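(* Let $m\ge 2$ and suppose $B,D\subseteq\mathbb{Z}_m$ are $2$-$\{m;k_1,k_2;\mu\}$ SDS. (i) If, for some $b\in B$, the sets $B\setminus\{b\}$ and $D$ are $2$-$\{m;k_1-1,k_2;\mu-1;\frac{m-1}{2}\}$ ASDS, then $k_1=\frac{m+3}{4}$ and $\mu=\frac{m+3}{16}+\frac{k_2^2-k_2}{m-1}$. (ii) If, for some $b\in\mathbb{Z}_m\setminus(B\cup D)$, the sets $B\cup\{b\}$ and $D$ are $2$-$\{m;k_1+1,k_2;\mu;\frac{m-1}{2}\}$ ASDS, then $k_1=\frac{m-1}{4}$ and $\mu=\frac{m-5}{16}+\frac{k_2^2-k_2}{m-1}$.
   Context: For $B,D\subseteq\mathbb{Z}_m$ and $a\in\mathbb{Z}_m\setminus\{0\}$, let $N_{B,D}(a)=|\{(x,x')\in B\times B: x-x'\equiv a\}|+|\{(y,y')\in D\times D: y-y'\equiv a\}|$ (the total number of solutions of the congruences $x_i-x_j\equiv a$, $y_{i'}-y_{j'}\equiv a \pmod m$ with elements of $B$, resp. $D$). For integers $\mu$ and $0\le t\le m-1$, $B$ and $D$ are $2$-$\{m;k_1,k_2;\mu;t\}$ ASDS (almost supplementary difference sets) if $|B|=k_1$, $|D|=k_2$, $N_{B,D}(a)=\mu$ for exactly $t$ values $a\ne0$, and $N_{B,D}(a)=\mu+1$ for the remaining $m-1-t$ values $a\ne0$. They are $2$-$\{m;k_1,k_2;\mu\}$ SDS (supplementary difference sets) if $|B|=k_1$, $|D|=k_2$ and $N_{B,D}(a)=\mu$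 for all $a\ne 0$. *)

From HB Require Import structures.
From mathcomp Require Import all_boot all_order all_algebra.
Set Implicit Arguments. Unset Strict Implicit. Unset Printing Implicit Defensive.
Import Order.TTheory GRing.Theory Num.Theory.

Definition ndiff (m : nat) (S : {set 'Z_m}) (a : 'Z_m) : nat :=
  #|[set p : 'Z_m * 'Z_m | [&& p.1 \in S, p.2 \in S & (p.1 - p.2)%R == a]]|.

Definition NBD (m : nat) (B D : {set 'Z_m}) (a : 'Z_m) : nat :=
  ndiff B a + ndiff D a.

Definition SDS (m : nat) (B D : {set 'Z_m}) (k1 k2 : nat) (mu : int) : Prop :=
  [/\ #|B| = k1, #|D| = k2 &
      forall a : 'Z_m, a != 0%R -> Posz (NBD B D a) = mu].

Definition ASDS (m : nat) (B D : {set 'Z_m}) (k1 k2 : nat) (mu : int)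
    (t : nat) : Prop :=
  [/\ #|B| = k1, #|D| = k2, t <= m - 1,
      #|[set a : 'Z_m | (a != 0%R) && (Posz (NBD B D a) == mu)]| = t &
      forall a : 'Z_m, a != 0%R ->
        Posz (NBD B D a) = mu \/ Posz (NBD B D a) = (mu + 1)%R].

From HB Require Import structures.
From mathcomp Require Import all_boot all_order all_algebra.
From mathcomp Require Import ring lra.
Set Implicit Arguments. Unset Strict Implicit. Unset Printing Implicit Defensive.
Import Order.TTheory GRing.Theory Num.Theory.
Local Open Scope ring_scope.

(* Summing N_{B,D}(a) over the nonzero a counts all ordered pairs of distinct
   elements of B and of D, so for B, D of sizes k1, k2
     k1 (k1 - 1) + k2 (k2 - 1) = \sum_{a <> 0} N(a).
   For an SDS the right-hand side is mu (m - 1); for an ASDS with parameter nu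
   and t exceptional values it is (nu + 1)(m - 1) - t.  Removing (resp. adding)
   one point of B therefore changes k1 (k1 - 1) by 2 (k1 - 1) (resp. 2 k1),
   which must equal t (resp. m - 1 - t); with t = (m - 1)/2 this fixes k1, and
   then the SDS identity fixes mu. *)

Section DifferenceCounts.

Variables (m : nat) (R : pzRingType).
Implicit Types (S B D : {set 'Z_m}) (a : 'Z_m).

Lemma ndiff0 S : ndiff S 0 = #|S|.
Proof.
rewrite /ndiff -(card_imset S (fun x y (exy : (x, x) = (y, y)) => congr1 fst exy)).
apply: eq_card => -[x y]; rewrite !inE /= subr_eq0.
apply/and3P/imsetP => [[_ yS /eqP ->] | [z zS [-> ->]]]; first by exists y.
by rewrite zS eqxx.
Qed.

Lemma sum_ndiff S : (\sum_a ndiff S a)%N = (#|S| ^ 2)%N.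
Proof.
rewrite -mulnn -cardsX -sum1_card.
rewrite (partition_big (fun p : 'Z_m * 'Z_m => p.1 - p.2) xpredT) //=.
apply: eq_bigr => a _; rewrite /ndiff -sum1_card.
by apply: eq_bigl => -[x y]; rewrite !inE /= andbA.
Qed.

Lemma sumr_ndiff_nz S :
  \sum_(a | a != 0) (ndiff S a)%:R = #|S|%:R * (#|S|%:R - 1) :> R.
Proof.
apply: (addIr #|S|%:R); rewrite mulrBr mulr1 subrK -natrM mulnn -sum_ndiff.
by rewrite [in RHS](bigD1 0) //= ndiff0 natrD natr_sum addrC.
Qed.

Lemma sumr_NBD_nz B D :
  \sum_(a | a != 0) (NBD B D a)%:R
    = #|B|%:R * (#|B|%:R - 1) + #|D|%:R * (#|D|%:R - 1) :> R.
Proof.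
by rewrite -!sumr_ndiff_nz -big_split; apply: eq_bigr => a _; rewrite natrD.
Qed.

Hypothesis m_gt1 : (1 < m)%N.

Lemma sumr_const_nz (x : R) :
  \sum_(a : 'Z_m | a != 0) x = x * (m%:R - 1).
Proof.
rewrite sumr_const cardC1 card_ord Zp_cast // -subn1 mulrnBr 1?ltnW //.
by rewrite mulrBr mulr1 mulr_natr.
Qed.

Lemma sumr_NBD_SDS B D k1 k2 mu :
  SDS B D k1 k2 mu ->
  \sum_(a | a != 0) (NBD B D a)%:R = mu%:~R * (m%:R - 1) :> R.
Proof.
case=> _ _ NBD_mu; rewrite -sumr_const_nz; apply: eq_bigr => a /NBD_mu <-.
by rewrite pmulrn.
Qed.

Lemma sumr_NBD_ASDS B D k1 k2 nu t :
  ASDS B D k1 k2 nu t ->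
  \sum_(a | a != 0) (NBD B D a)%:R = (nu + 1)%:~R * (m%:R - 1) - t%:R :> R.
Proof.
case=> _ _ _ <- NBD_nu; rewrite -sumr_const_nz -sum1_card natr_sum.
rewrite [X in _ - X](eq_bigl (fun a => (a != 0) && (Posz (NBD B D a) == nu)));
  last by move=> a; rewrite inE.
rewrite big_mkcondr -sumrB.
apply: eq_bigr => a /NBD_nu [] NBDa; rewrite pmulrn NBDa.
  by rewrite eqxx intrD addrK.
by rewrite -subr_eq0 addrAC subrr add0r oner_eq0 subr0.
Qed.

End DifferenceCounts.

Theorem lemma3 (m : nat) (hm : (1 < m)%N) (B D : {set 'Z_m})
    (k1 k2 : nat) (mu : int) (hSDS : SDS B D k1 k2 mu) :
  (forall (b : 'Z_m) (t : nat), b \in B ->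
     t%:Q = (m%:Q - 1) / 2 ->
     ASDS (B :\ b) D (k1 - 1)%N k2 (mu - 1) t ->
     k1%:Q = (m%:Q + 3) / 4 /\
     mu%:~R = (m%:Q + 3) / 16 + ((k2 ^ 2)%N%:Q - k2%:Q) / (m%:Q - 1))
  /\
  (forall (b : 'Z_m) (t : nat), b \notin B :|: D ->
     t%:Q = (m%:Q - 1) / 2 ->
     ASDS (b |: B) D (k1 + 1)%N k2 mu t ->
     k1%:Q = (m%:Q - 1) / 4 /\
     mu%:~R = (m%:Q - 5) / 16 + ((k2 ^ 2)%N%:Q - k2%:Q) / (m%:Q - 1)).
Proof.
have SDS_sum := sumr_NBD_SDS rat hm hSDS.
case: hSDS SDS_sum => cardB cardD _; rewrite sumr_NBD_nz cardB cardD => SDS_sum.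
have m1_neq0 : m%:R - 1 != 0 :> rat by rewrite subr_eq0 pnatr_eq1 gtn_eqF.
(* [n%:Q] is [(Posz n)%:~R]; [pmulrn] turns it into [n%:R]. *)
rewrite -!pmulrn natrX.
split=> b t hb t_half hA; have ASDS_sum := sumr_NBD_ASDS rat hm hA;
  case: hA ASDS_sum => cardB' cardD' _ _ _; rewrite sumr_NBD_nz cardB' cardD';
  rewrite -pmulrn in t_half.
- have k1_gt0 : (0 < k1)%N by rewrite -cardB (cardD1 b) hb.
  rewrite natrB // subrK => ASDS_sum.
  have k1E : k1%:R = (m%:R + 3) / 4 :> rat by lra.
  by split=> //; rewrite -[LHS](mulfK m1_neq0) -SDS_sum k1E; field.
- rewrite natrD intrD mulrDl mul1r => ASDS_sum.
  have k1E : k1%:R = (m%:R - 1) / 4 :> rat by lra.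
  by split=> //; rewrite -[LHS](mulfK m1_neq0) -SDS_sum k1E; field.
Qed.
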